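(* Let $\mathcal{CL}=\{\ell_1,\dots,\ell_n,C_1,\dots,C_k\}\subset\mathbb{P}^2_{\mathbb{C}}$ be a conic-line arrangement with $n\geq 3$ and $k\geq 3$ such that $t_{n+k}=0$. Then the Levi graph $H$ of $\mathcal{CL}$ contains an induced cycle of length $6$.
   Context: A conic-line arrangement $\mathcal{CL}=\{\ell_1,\dots,\ell_n,C_1,\dots,C_k\}$ is an arrangement of $n$ lines and $k$ smooth conics in $\mathbb{P}^2_{\mathbb{C}}$ having only ordinary singularities, i.e. every intersection point looks locally like $\{x^a=y^a\}$ for some integer $a\geq 2$. For $r\geq 2$, $t_r$ denotes the number of points of $\mathrm{Sing}(\mathcal{CL})$ lying on exactly $r$ curves of $\mathcal{CL}$; thus $t_{n+k}=0$ means no point lies on all curves. The Levi graph $H$ is the bipartite graph with one vertex for each point $p\in\mathrm{Sing}(\mathcal{CL})$, one vertex for each line and each conic, and an edge between the vertex of $p$ and the vertex of a curve iff $p$ lies on that curve. *)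

From HB Require Import structures.
From mathcomp Require Import all_boot all_order all_algebra.
From mathcomp Require Import reals complex.
Set Implicit Arguments. Unset Strict Implicit. Unset Printing Implicit Defensive.
Import Order.TTheory GRing.Theory Num.Theory.
Local Open Scope ring_scope.

Section ConicLine.
Variable F : fieldType.

(* A point of P^2(F): a nonzero vector whose first nonzero coordinate is 1
   (canonical representative of its class up to scaling). *)
Definition normalized (v : 'rV[F]_3) : bool :=
  (v 0 0 == 1) ||
  ((v 0 0 == 0) && ((v 0 1 == 1) || ((v 0 1 == 0) && (v 0 2%:R == 1)))).

Definition proj_point := {v : 'rV[F]_3 | normalized v}.

Definition bilin (u : 'rV[F]_3) (M : 'M[F]_3) (w : 'rV[F]_3) : F :=
  (u *m M *m w^T) 0 0.

Variables n k : nat.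

(* Curves of the arrangement: lines are indexed by inl i, conics by inr j. *)
Definition curve_idx := ('I_n + 'I_k)%type.

(* L i : coefficient vector of the linear form defining the line l_i;
   Q j : symmetric matrix of the quadratic form defining the conic C_j. *)
Definition on_curve (L : 'I_n -> 'rV[F]_3) (Q : 'I_k -> 'M[F]_3)
    (c : curve_idx) (p : proj_point) : bool :=
  match c with
  | inl i => (L i *m (val p)^T) 0 0 == 0
  | inr j => bilin (val p) (Q j) (val p) == 0
  end.

(* Gradient of the defining polynomial of curve c at p (defines the tangent
   line of the smooth curve c at a point p on it). *)
Definition grad (L : 'I_n -> 'rV[F]_3) (Q : 'I_k -> 'M[F]_3)
    (c : curve_idx) (p : proj_point) : 'rV[F]_3 :=
  match c with
  | inl i => L i
  | inr j => val p *m (Q j + (Q j)^T)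
  end.

(* Conic-line arrangement with only ordinary singularities:
   - each l_i is a line (nonzero linear form), each C_j a smooth conic
     (symmetric nondegenerate quadratic form);
   - the n + k curves are pairwise distinct (as subsets of P^2);
   - every intersection point is ordinary: any two distinct curves through a
     point p have distinct tangent lines at p (pairwise transversal smooth
     branches, i.e. locally x^a = y^a). *)
Definition conic_line_arrangement (L : 'I_n -> 'rV[F]_3) (Q : 'I_k -> 'M[F]_3)
    : Prop :=
  [/\ forall i, L i != 0,
      forall j, (Q j)^T = Q j /\ \det (Q j) != 0,
      forall c d : curve_idx, c != d -> ~ (on_curve L Q c =1 on_curve L Q d)
    & forall (p : proj_point) (c d : curve_idx), c != d ->
        on_curve L Q c p -> on_curve L Q d p ->
        ~ (exists a : F, grad L Q c p = a *: grad L Q d p)].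

Definition mult (L : 'I_n -> 'rV[F]_3) (Q : 'I_k -> 'M[F]_3) (p : proj_point)
  : nat := #|[pred c : curve_idx | on_curve L Q c p]|.

Definition sing_pt L Q (p : proj_point) : bool := (2 <= mult L Q p)%N.

(* t_r = 0 : no point of Sing(CL) lies on exactly r curves *)
Definition t_zero L Q (r : nat) : Prop :=
  forall p : proj_point, sing_pt L Q p -> (mult L Q p != r)%N.

Definition levi_vtype := (proj_point + curve_idx)%type.

Definition levi_vertex L Q (v : levi_vtype) : bool :=
  match v with inl p => sing_pt L Q p | inr _ => true end.

Definition levi_adj L Q (v w : levi_vtype) : bool :=
  match v, w with
  | inl p, inr c => on_curve L Q c p
  | inr c, inl p => on_curve L Q c p
  | _, _ => false
  end.

End ConicLine.

Definition has_induced_cycle (T : Type) (V : T -> bool) (adj : T -> T -> bool)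
    (m : nat) : Prop :=
  exists f : 'I_m -> T,
    [/\ injective f, forall i, V (f i)
      & forall i j : 'I_m,
          adj (f i) (f j) <-> (j = (i.+1 %% m)%N :> nat \/ i = (j.+1 %% m)%N :> nat)].

From HB Require Import structures.
From mathcomp Require Import all_boot all_order all_algebra.
From mathcomp Require Import reals complex.
From mathcomp Require Import ring.
Set Implicit Arguments. Unset Strict Implicit. Unset Printing Implicit Defensive.
Import Order.TTheory GRing.Theory Num.Theory.
Local Open Scope ring_scope.

(* Two of the lines meet in a point p, and since t_(n+k) = 0 some curve C of
   the arrangement misses p. Each of the two lines meets C (two lines always
   meet, and a line meets a conic over an algebraically closed field), and
   neither meeting point is p, because two distinct lines share a single point.
   The two lines, C and these three points form a triangle, i.e. an induced
   6-cycle of the Levi graph. *)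

Section Vectors.
Variable F : fieldType.
Implicit Types (u v w : 'rV[F]_3) (a b c : F).

Definition row3 a b c : 'rV[F]_3 := \row_j [:: a; b; c]`_j.

Lemma eq_row3 u v :
  u 0 0 = v 0 0 -> u 0 1 = v 0 1 -> u 0 2%:R = v 0 2%:R -> u = v.
Proof.
move=> e0 e1 e2; apply/rowP => -[[|[|[|//]]] lt_j3].
- by rewrite (_ : Ordinal lt_j3 = 0) //; apply/val_inj.
- by rewrite (_ : Ordinal lt_j3 = 1) //; apply/val_inj.
- by rewrite (_ : Ordinal lt_j3 = 2%:R) //; apply/val_inj.
Qed.

Definition dot u v : F := (u *m v^T) 0 0.

Lemma dotE u v : dot u v = u 0 0 * v 0 0 + u 0 1 * v 0 1 + u 0 2%:R * v 0 2%:R.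
Proof.
rewrite /dot mxE !big_ord_recl big_ord0 addr0 addrA !mxE.
by congr (_ * _ + _ * _ + _ * _); congr (_ _ _); apply/val_inj.
Qed.

Lemma dotC u v : dot u v = dot v u.
Proof. by rewrite !dotE; ring. Qed.

Lemma dotZr u v a : dot u (a *: v) = a * dot u v.
Proof. by rewrite !dotE !mxE; ring. Qed.

Lemma dotDr u v w : dot u (v + w) = dot u v + dot u w.
Proof. by rewrite !dotE !mxE; ring. Qed.

Lemma dot_delta u j : dot (delta_mx 0 j) u = u 0 j.
Proof. by rewrite /dot -rowE !mxE. Qed.

Definition cross u v : 'rV[F]_3 :=
  row3 (u 0 1 * v 0 2%:R - u 0 2%:R * v 0 1)
       (u 0 2%:R * v 0 0 - u 0 0 * v 0 2%:R)
       (u 0 0 * v 0 1 - u 0 1 * v 0 0).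

Lemma dot_crossl u v : dot u (cross u v) = 0.
Proof. by rewrite dotE !mxE /=; ring. Qed.

Lemma dot_crossr u v : dot v (cross u v) = 0.
Proof. by rewrite dotE !mxE /=; ring. Qed.

Lemma crossC u v : cross u v = - cross v u.
Proof. by apply: eq_row3; rewrite !mxE /=; ring. Qed.

Lemma cross_lin u v w a b :
  cross u (a *: v + b *: w) = a *: cross u v + b *: cross u w.
Proof. by apply: eq_row3; rewrite !mxE /=; ring. Qed.

Lemma cross_cross u v w : cross u (cross v w) = dot u w *: v - dot u v *: w.
Proof. by apply: eq_row3; rewrite !dotE !mxE /=; ring. Qed.

Lemma row_neq0P u : reflect (exists j, u 0 j != 0) (u != 0).
Proof.
apply: (iffP idP) => [u_neq0 | [j]]; last by apply: contraNneq => ->; rewrite mxE.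
apply/existsP; apply: contraNT u_neq0; rewrite negb_exists => /forallP u0.
by apply/eqP/rowP => j; rewrite mxE; apply/eqP; rewrite -[_ == _]negbK u0.
Qed.

Lemma cross_eq0 u v : v != 0 -> cross u v = 0 -> exists a, u = a *: v.
Proof.
case/row_neq0P=> j vj_neq0 uv0; exists ((v 0 j)^-1 * dot (delta_mx 0 j) u).
have : cross (delta_mx 0 j) (cross u v) = 0.
  by rewrite uv0; apply: eq_row3; rewrite !mxE /=; ring.
rewrite cross_cross dot_delta => /eqP; rewrite subr_eq0 => /eqP uv.
by rewrite -scalerA -uv scalerA mulVf ?scale1r.
Qed.
End Vectors.

Section Normalization.
Variable F : fieldType.
Implicit Types (u v w : 'rV[F]_3) (a b : F).

Definition lead3 v : F :=
  if v 0 0 != 0 then v 0 0 else if v 0 1 != 0 then v 0 1 else v 0 2%:R.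

Lemma normalizedE v : normalized v = (lead3 v == 1).
Proof.
rewrite /normalized /lead3.
by have [->|v0] := eqVneq (v 0 0) 0; have [->|v1] := eqVneq (v 0 1) 0;
  rewrite /= ?eqxx ?(eq_sym 0) ?oner_eq0 ?orbF.
Qed.

Lemma lead3Z a v : lead3 (a *: v) = a * lead3 v.
Proof.
have [->|a_neq0] := eqVneq a 0; first by rewrite /lead3 !mxE !mul0r !eqxx.
rewrite /lead3 !mxE !mulf_eq0 (negbTE a_neq0) /=.
by case: (v 0 0 != 0); case: (v 0 1 != 0).
Qed.

Lemma lead3_eq0 v : (lead3 v == 0) = (v == 0).
Proof.
apply/idP/idP => [|/eqP->]; last by rewrite /lead3 !mxE eqxx.
rewrite /lead3; case: ifPn => [/negbTE-> //|/negPn/eqP v0].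
case: ifPn => [/negbTE-> //|/negPn/eqP v1 /eqP v2].
by apply/eqP/eq_row3; rewrite ?v0 ?v1 ?v2 mxE.
Qed.

Lemma normalized_scale_uniq u v w a b : normalized u -> normalized v ->
  u = a *: w -> v = b *: w -> u = v.
Proof.
rewrite !normalizedE => /eqP lu1 /eqP lv1 uw vw.
have w_neq0 : lead3 w != 0.
  by apply: contra_eq_neq lu1 => w0; rewrite uw lead3Z w0 mulr0 eq_sym oner_eq0.
have: a * lead3 w = b * lead3 w by rewrite -!lead3Z -uw -vw lu1 lv1.
by move/(mulIf w_neq0); rewrite uw vw => ->.
Qed.

Lemma exists_point v : v != 0 ->
  exists p : proj_point F, exists2 c, c != 0 & val p = c *: v.
Proof.
rewrite -lead3_eq0 => l_neq0.
have nv : normalized ((lead3 v)^-1 *: v) by rewrite normalizedE lead3Z mulVf.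
by exists (exist (fun v => normalized v) _ nv), (lead3 v)^-1; rewrite ?invr_eq0.
Qed.

End Normalization.

Section LineConic.
Variable F : closedFieldType.

Lemma binary_form_isotropic (a b c : F) : exists s t : F,
  ((s != 0) || (t != 0)) /\ a * s ^+ 2 + b * s * t + c * t ^+ 2 = 0.
Proof.
have [->|a_neq0] := eqVneq a 0.
  by exists 1, 0; rewrite oner_neq0; split => //; ring.
have [x] := @GRing.solve_monicpoly F 2 (nth 0 [:: - c / a; - b / a]) isT.
rewrite !big_ord_recl big_ord0 /= => x2.
exists x, 1; rewrite oner_neq0 orbT; split => //.
by rewrite x2; field.
Qed.

Lemma bilin_pencil (u v : 'rV[F]_3) (M : 'M[F]_3) s t :
  bilin (s *: u + t *: v) M (s *: u + t *: v) =
  bilin u M u * s ^+ 2 + (bilin u M v + bilin v M u) * s * t + bilin v M v * t ^+ 2.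
Proof.
rewrite /bilin linearD !linearZ /= !mulmxDl !mulmxDr -!scalemxAl -!scalemxAr.
by rewrite !mxE; ring.
Qed.

Lemma line_meets_conic (l : 'rV[F]_3) (M : 'M[F]_3) : l != 0 ->
  exists u, [/\ u != 0, dot l u = 0 & bilin u M u = 0].
Proof.
move=> l_neq0; have [j lj_neq0] := row_neq0P _ l_neq0.
(* Crossing [l] with the two unit vectors other than [e_j] gives a basis of
   the plane [dot l _ = 0], since [l_j != 0]. *)
pose e a : 'rV[F]_3 := delta_mx 0 (lift j a).
pose A := cross l (e 0); pose B := cross l (e 1).
have [s [t [st_neq0 q0]]] :=
  binary_form_isotropic (bilin A M A) (bilin A M B + bilin B M A) (bilin B M B).
exists (s *: A + t *: B); split.
- rewrite -cross_lin; apply: contraTneq st_neq0 => /eqP.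
  rewrite crossC oppr_eq0 => /eqP /(cross_eq0 l_neq0) [c st_l].
  have coord x := congr1 (fun w : 'rV[F]_3 => w 0 x) st_l.
  have c0 : c = 0.
    move: (coord j); rewrite !mxE /= !(negbTE (neq_lift _ _)) !mulr0 addr0.
    by move/esym/eqP; rewrite mulf_eq0 (negbTE lj_neq0) orbF => /eqP.
  move: (coord (lift j 0)) (coord (lift j 1)).
  rewrite c0 !mxE !eqxx !(inj_eq (@lift_inj _ j)) /= !mulr0 !mulr1 !mul0r.
  by rewrite addr0 add0r => -> ->; rewrite eqxx.
- by rewrite dotDr !dotZr !dot_crossl !mulr0 addr0.
- by rewrite bilin_pencil.
Qed.

End LineConic.

Section Arrangement.
Variables (F : fieldType) (n k : nat).
Variables (L : 'I_n -> 'rV[F]_3) (Q : 'I_k -> 'M[F]_3).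
Local Notation on := (on_curve L Q).

Definition incident (c : curve_idx n k) (v : 'rV[F]_3) : bool :=
  match c with
  | inl i => dot (L i) v == 0
  | inr j => bilin v (Q j) v == 0
  end.

Lemma on_curveE c p : on c p = incident c (val p).
Proof. by case: c. Qed.

Lemma incidentZ c a v : a != 0 -> incident c (a *: v) = incident c v.
Proof.
move=> a_neq0; case: c => [i|j] /=; first by rewrite dotZr mulf_eq0 (negbTE a_neq0).
rewrite /bilin linearZ /= -scalemxAr -!scalemxAl scalerA mxE.
by rewrite !mulf_eq0 (negbTE a_neq0).
Qed.

Lemma point_of_vector v : v != 0 ->
  exists p : proj_point F, forall c, on c p = incident c v.
Proof.
move=> v_neq0; have [p [a a_neq0 pv]] := exists_point v_neq0.
by exists p => c; rewrite on_curveE pv incidentZ.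
Qed.

Hypothesis arrL : conic_line_arrangement L Q.

Lemma cross_lines_neq0 i i' : i != i' -> cross (L i) (L i') != 0.
Proof.
case: arrL => L_neq0 _ distinct _ ii'.
apply/eqP => /(cross_eq0 (L_neq0 i')) [a Lia].
have a_neq0 : a != 0 by apply: contraNneq (L_neq0 i) => a0; rewrite Lia a0 scale0r.
apply: (distinct (inl i) (inl i') ii') => p /=.
by rewrite Lia -scalemxAl mxE mulf_eq0 (negbTE a_neq0).
Qed.

Lemma meet_lines i i' : i != i' -> exists p, on (inl i) p && on (inl i') p.
Proof.
move=> ii'; have [p pE] := point_of_vector (cross_lines_neq0 ii').
by exists p; rewrite !pE /= dot_crossl dot_crossr eqxx.
Qed.

Lemma meet_lines_uniq i i' p q : i != i' ->
  on (inl i) p -> on (inl i') p -> on (inl i) q -> on (inl i') q -> p = q.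
Proof.
move=> ii'.
have on_both x : on (inl i) x -> on (inl i') x ->
    exists a, val x = a *: cross (L i) (L i').
  rewrite !on_curveE => /eqP xi /eqP xi'; apply: cross_eq0 (cross_lines_neq0 ii') _.
  by rewrite cross_cross !(dotC (val x)) xi xi' !scale0r subrr.
move=> pi pi' qi qi'; have [a pa] := on_both p pi pi'; have [b qb] := on_both q qi qi'.
exact/val_inj/(normalized_scale_uniq (valP p) (valP q) pa qb).
Qed.

End Arrangement.

Lemma meet_line_curve (F : closedFieldType) n k
    (L : 'I_n -> 'rV[F]_3) (Q : 'I_k -> 'M[F]_3) i c :
  conic_line_arrangement L Q -> c != inl i ->
  exists p, on_curve L Q (inl i) p && on_curve L Q c p.
Proof.
move=> arrL; case: c => [i'|j] ci; first by apply: meet_lines; rewrite // eq_sym.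
have [L_neq0 _ _ _] := arrL.
have [u [u_neq0 Lu Qu]] := line_meets_conic (Q j) (L_neq0 i).
by have [p pE] := point_of_vector L Q u_neq0; exists p; rewrite !pE /= Lu Qu eqxx.
Qed.

Section LeviGraph.
Variables (F : fieldType) (n k : nat).
Variables (L : 'I_n -> 'rV[F]_3) (Q : 'I_k -> 'M[F]_3).
Local Notation on := (on_curve L Q).

Lemma sing_pt_of_two c d p : c != d -> on c p -> on d p -> sing_pt L Q p.
Proof. by move=> cd cp dp; apply/card_gt1P; exists c, d; rewrite !inE cp dp. Qed.

Lemma exists_off_curve p : sing_pt L Q p -> t_zero L Q (n + k) ->
  exists c, ~~ on c p.
Proof.
move=> sing_p /(_ p sing_p) not_all; apply/existsP; rewrite -negb_forall.
apply: contra not_all => /forallP on_all.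
rewrite /mult (eq_card (B := predT)) => [|c]; last by rewrite !inE on_all.
by rewrite card_sum !card_ord.
Qed.

Lemma triangle_induced_cycle (x y z : proj_point F) (a b c : curve_idx n k) :
  a != b -> b != c -> a != c ->
  on a x -> on c x -> ~~ on b x ->
  on a y -> on b y -> ~~ on c y ->
  on b z -> on c z -> ~~ on a z ->
  has_induced_cycle (levi_vertex L Q) (levi_adj L Q) 6.
Proof.
move=> ab bc ac ax cx bx ay b_y cy bz cz az.
have xy : x != y by apply: contraNneq bx => ->.
have xz : x != z by apply: contraNneq bx => ->.
have yz : y != z by apply: contraNneq cy => ->.
pose s : seq (levi_vtype F n k) := [:: inl x; inr a; inl y; inr b; inl z; inr c].
have s_uniq : uniq s.
  rewrite /= !inE !eqE /= !orbF.
  by rewrite (negbTE xy) (negbTE xz) (negbTE yz) (negbTE ab) ac bc.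
exists (fun i : 'I_6 => nth (inl x) s i); split.
- by move=> i j /eqP; rewrite nth_uniq // => /eqP/val_inj.
- move=> [[|[|[|[|[|[|//]]]]]] ?] //=.
  + exact: sing_pt_of_two ac ax cx.
  + exact: sing_pt_of_two ab ay b_y.
  + exact: sing_pt_of_two bc bz cz.
- move=> [[|[|[|[|[|[|//]]]]]] ?] [[|[|[|[|[|[|//]]]]]] ?] /=;
  rewrite ?ax ?cx ?(negbTE bx) ?ay ?b_y ?(negbTE cy) ?bz ?cz ?(negbTE az).
  all: split; first (move=> adj; first [by left | by right | by []]).
  all: first [by [] | by case => /eqP].
Qed.

End LeviGraph.

Theorem theorem5p5 (R : realType) (n k : nat)
    (L : 'I_n -> 'rV[R[i]]_3) (Q : 'I_k -> 'M[R[i]]_3) :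
  (3 <= n)%N -> (3 <= k)%N ->
  conic_line_arrangement L Q ->
  t_zero L Q (n + k) ->
  has_induced_cycle (levi_vertex L Q) (levi_adj L Q) 6.
Proof.
move=> n_ge3 _ arrL no_common_pt.
pose l0 : 'I_n := Ordinal (leq_trans (isT : 1 <= 3)%N n_ge3).
pose l1 : 'I_n := Ordinal (leq_trans (isT : 2 <= 3)%N n_ge3).
have l01 : l0 != l1 by [].
have l01' : inl l0 != inl l1 :> curve_idx n k by [].
have [p /andP[p0 p1]] := meet_lines arrL l01.
have [c cp] := exists_off_curve (sing_pt_of_two l01' p0 p1) no_common_pt.
have l0_c : inl l0 != c by apply: contraNneq cp => <-.
have c_l0 : c != inl l0 by rewrite eq_sym.
have c_l1 : c != inl l1 by apply: contraNneq cp => ->.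
have [y /andP[y0 yc]] := meet_line_curve arrL c_l0.
have [z /andP[z1 zc]] := meet_line_curve arrL c_l1.
have y1 : ~~ on_curve L Q (inl l1) y.
  by apply: contra cp => y1; rewrite -(meet_lines_uniq arrL l01 y0 y1 p0 p1).
have z0 : ~~ on_curve L Q (inl l0) z.
  by apply: contra cp => z0; rewrite -(meet_lines_uniq arrL l01 z0 z1 p0 p1).
exact: (triangle_induced_cycle l0_c c_l1 l01' p0 p1 cp y0 yc y1 zc z1 z0).
Qed.
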